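(* Let $a>0$, $b>0$ and $f(x)=a^2\left(\frac{1+b^2x}{b^2+x}\right)^2$ on $(0,\infty)$. 1) If $b>1$, then for every $x_0>0$ the sequence $x_n=f(x_{n-1})$, $n\ge1$, converges (to a fixed point of $f$). 2) If $b<1$, then for every $y_0>0$ the sequence $y_n=g(y_{n-1})$, $n\ge1$, converges, where $g=f\circ f$. *)

From Stdlib Require Import Reals.
Open Scope R_scope.

Definition fab (a b : R) (x : R) : R :=
  a ^ 2 * ((1 + b ^ 2 * x) / (b ^ 2 + x)) ^ 2.

Fixpoint orbit (h : R -> R) (x0 : R) (n : nat) : R :=
  match n with
  | O => x0
  | S n => h (orbit h x0 n)
  end.

From Stdlib Require Import Reals Lra Lia.
Open Scope R_scope.

(* f = a^2 h^2 where h x = (1 + b^2 x)/(b^2 + x) is a Moebius map whose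
   derivative has the sign of b^4 - 1 and which maps (0, oo) into a compact
   subinterval of (0, oo).  So for b > 1 the map f is nondecreasing, for
   b < 1 it is nonincreasing and f o f is nondecreasing; in both cases the orbit of a
   nondecreasing self-map of (0, oo) with bounded range is monotone and
   bounded, hence convergent, and by continuity the limit of an f-orbit is a
   fixed point of f. *)

Lemma Un_cv_ge (u : nat -> R) (c l : R) :
  (forall n, c <= u n) -> Un_cv u l -> c <= l.
Proof.
  intros Hc Hu.
  assert (Hconst : Un_cv (fun _ => c) c).
  { intros eps Heps; exists O; intros n _; unfold R_dist.
    rewrite Rminus_diag, Rabs_R0; exact Heps. }
  exact (Rle_cv_lim Hc Hconst Hu).
Qed.

Lemma orbit_cv_fixed (F : R -> R) (x0 l : R) :
  continuity_pt F l -> Un_cv (orbit F x0) l -> F l = l.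
Proof.
  intros HF Hl.
  assert (HFl : Un_cv (fun n => F (orbit F x0 n)) (F l)) by (apply continuity_seq; assumption).
  assert (Hshift : Un_cv (fun n => F (orbit F x0 n)) l).
  { intros eps Heps; destruct (Hl eps Heps) as [N HN].
    exists N; intros n Hn; apply (HN (S n)); lia. }
  exact (UL_sequence _ _ _ HFl Hshift).
Qed.

Section NondecreasingOrbit.

Variables (F : R -> R) (m M : R).
Hypothesis m_gt0 : 0 < m.
Hypothesis F_range : forall x, 0 < x -> m <= F x <= M.
Hypothesis F_nondecr : forall x y, 0 < x -> x <= y -> F x <= F y.

Lemma orbit_bounded (x0 : R) :
  0 < x0 -> forall n, Rmin x0 m <= orbit F x0 n <= Rmax x0 M.
Proof.
  intros Hx0 n; induction n as [|n IH]; simpl.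
  - split; [apply Rmin_l | apply Rmax_l].
  - assert (Hpos : 0 < orbit F x0 n).
    { apply Rlt_le_trans with (Rmin x0 m); [apply Rmin_glb_lt|]; lra. }
    destruct (F_range _ Hpos).
    pose proof (Rmin_r x0 m); pose proof (Rmax_r x0 M); lra.
Qed.

Lemma orbit_pos (x0 : R) : 0 < x0 -> forall n, 0 < orbit F x0 n.
Proof.
  intros Hx0 n; destruct (orbit_bounded x0 Hx0 n) as [Hlo _].
  apply Rlt_le_trans with (Rmin x0 m); [apply Rmin_glb_lt|]; lra.
Qed.

Lemma orbit_monotone (x0 : R) :
  0 < x0 -> Un_growing (orbit F x0) \/ Un_decreasing (orbit F x0).
Proof.
  intros Hx0; pose proof (orbit_pos x0 Hx0) as Hpos.
  destruct (Rle_dec x0 (F x0)) as [Hup|Hdown]; [left | right];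
    intro n; induction n as [|n IH]; simpl; try lra.
  - apply F_nondecr; [apply (Hpos n) | exact IH].
  - apply F_nondecr; [apply (Hpos (S n)) | exact IH].
Qed.

Lemma orbit_cv (x0 : R) : 0 < x0 -> exists l, 0 < l /\ Un_cv (orbit F x0) l.
Proof.
  intros Hx0; pose proof (orbit_bounded x0 Hx0) as Hb.
  assert (Hcv : exists l, Un_cv (orbit F x0) l).
  { destruct (orbit_monotone x0 Hx0) as [Hg|Hd].
    - destruct (growing_cv _ Hg) as [l Hl]; [|now exists l].
      exists (Rmax x0 M); intros x [i ->]; apply Hb.
    - destruct (decreasing_cv _ Hd) as [l Hl]; [|now exists l].
      exists (- Rmin x0 m); intros x [i ->]; unfold opp_seq.
      destruct (Hb i); lra. }
  destruct Hcv as [l Hl]; exists l; split; [|exact Hl].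
  apply Rlt_le_trans with (Rmin x0 m); [apply Rmin_glb_lt; lra|].
  exact (Un_cv_ge _ _ _ (fun n => proj1 (Hb n)) Hl).
Qed.

End NondecreasingOrbit.

Definition mobius (b x : R) : R := (1 + b ^ 2 * x) / (b ^ 2 + x).

Lemma fab_mobius (a b x : R) : fab a b x = a ^ 2 * mobius b x ^ 2.
Proof. reflexivity. Qed.

Lemma mobius_sub (b x y : R) : 0 < b -> 0 < x -> 0 < y ->
  mobius b y - mobius b x = (b ^ 4 - 1) * (y - x) / ((b ^ 2 + x) * (b ^ 2 + y)).
Proof.
  intros Hb Hx Hy; assert (Hb2 : 0 < b ^ 2) by (apply pow_lt; lra).
  unfold mobius; field; lra.
Qed.

Lemma mobius_bounds (b x : R) : 0 < b -> 0 < x ->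
  / (/ b ^ 2 + b ^ 2) <= mobius b x <= / b ^ 2 + b ^ 2.
Proof.
  intros Hb Hx.
  assert (Hb2 : 0 < b ^ 2) by (apply pow_lt; lra).
  assert (Hib2 : 0 < / b ^ 2) by (apply Rinv_0_lt_compat; lra).
  set (K := / b ^ 2 + b ^ 2).
  assert (HK : 0 < K) by (unfold K; lra).
  split.
  - assert (E : mobius b x - / K = (1 + b ^ 6 * x) / (b ^ 2 * K * (b ^ 2 + x))).
    { unfold mobius, K; field.
      pose proof (pow2_ge_0 (b * b)); repeat split; lra. }
    assert (0 <= (1 + b ^ 6 * x) / (b ^ 2 * K * (b ^ 2 + x))).
    { unfold Rdiv; apply Rle_mult_inv_pos; [|repeat apply Rmult_lt_0_compat; lra].
      assert (0 < b ^ 6) by (apply pow_lt; lra). nra. }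
    lra.
  - assert (E : K - mobius b x = (x / b ^ 2 + b ^ 4) / (b ^ 2 + x)).
    { unfold mobius, K; field; lra. }
    assert (0 <= (x / b ^ 2 + b ^ 4) / (b ^ 2 + x)).
    { unfold Rdiv; apply Rle_mult_inv_pos; [|lra].
      assert (0 < b ^ 4) by (apply pow_lt; lra).
      assert (0 < x / b ^ 2) by (apply Rdiv_lt_0_compat; lra). lra. }
    lra.
Qed.

Lemma mobius_pos (b x : R) : 0 < b -> 0 < x -> 0 < mobius b x.
Proof.
  intros Hb Hx; destruct (mobius_bounds b x Hb Hx) as [Hlo _].
  assert (Hb2 : 0 < b ^ 2) by (apply pow_lt; lra).
  assert (0 < / b ^ 2) by (apply Rinv_0_lt_compat; lra).
  assert (0 < / (/ b ^ 2 + b ^ 2)) by (apply Rinv_0_lt_compat; lra).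
  lra.
Qed.

Lemma fab_pos (a b x : R) : 0 < a -> 0 < b -> 0 < x -> 0 < fab a b x.
Proof.
  intros Ha Hb Hx; rewrite fab_mobius.
  apply Rmult_lt_0_compat; apply pow_lt; [exact Ha | exact (mobius_pos b x Hb Hx)].
Qed.

Lemma fab_range (a b x : R) : 0 < b -> 0 < x ->
  a ^ 2 * (/ (/ b ^ 2 + b ^ 2)) ^ 2 <= fab a b x
    <= a ^ 2 * (/ b ^ 2 + b ^ 2) ^ 2.
Proof.
  intros Hb Hx; rewrite fab_mobius.
  destruct (mobius_bounds b x Hb Hx) as [Hlo Hhi].
  assert (Hb2 : 0 < b ^ 2) by (apply pow_lt; lra).
  assert (0 < / b ^ 2) by (apply Rinv_0_lt_compat; lra).
  assert (0 < / (/ b ^ 2 + b ^ 2)) by (apply Rinv_0_lt_compat; lra).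
  split; apply Rmult_le_compat_l; try apply pow2_ge_0; apply pow_incr; lra.
Qed.

Lemma fab_range_lb_pos (a b : R) : 0 < a -> 0 < b ->
  0 < a ^ 2 * (/ (/ b ^ 2 + b ^ 2)) ^ 2.
Proof.
  intros Ha Hb; assert (Hb2 : 0 < b ^ 2) by (apply pow_lt; lra).
  assert (0 < / b ^ 2) by (apply Rinv_0_lt_compat; lra).
  assert (0 < / (/ b ^ 2 + b ^ 2)) by (apply Rinv_0_lt_compat; lra).
  apply Rmult_lt_0_compat; apply pow_lt; lra.
Qed.

Lemma fab_nondecr (a b x y : R) : 1 <= b -> 0 < x -> x <= y ->
  fab a b x <= fab a b y.
Proof.
  intros Hb Hx Hxy; rewrite !fab_mobius.
  assert (1 <= b ^ 4) by (apply pow_R1_Rle; lra).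
  assert (Hb2 : 0 < b ^ 2) by (apply pow_lt; lra).
  assert (0 <= mobius b y - mobius b x).
  { rewrite mobius_sub by lra.
    unfold Rdiv; apply Rle_mult_inv_pos; [|apply Rmult_lt_0_compat]; nra. }
  pose proof (mobius_pos b x ltac:(lra) Hx).
  apply Rmult_le_compat_l; [apply pow2_ge_0|]; apply pow_incr; lra.
Qed.

Lemma fab_nonincr (a b x y : R) : 0 < b -> b <= 1 -> 0 < x -> x <= y ->
  fab a b y <= fab a b x.
Proof.
  intros Hb Hb1 Hx Hxy; rewrite !fab_mobius.
  assert (b ^ 4 <= 1) by (rewrite <- (pow1 4); apply pow_incr; lra).
  assert (Hb2 : 0 < b ^ 2) by (apply pow_lt; lra).
  assert (0 <= mobius b x - mobius b y).
  { replace (mobius b x - mobius b y) with (- (mobius b y - mobius b x)) by ring.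
    rewrite mobius_sub by lra.
    assert (0 <= (1 - b ^ 4) * (y - x) / ((b ^ 2 + x) * (b ^ 2 + y))).
    { unfold Rdiv; apply Rle_mult_inv_pos; [|apply Rmult_lt_0_compat]; nra. }
    unfold Rdiv in *; lra. }
  pose proof (mobius_pos b y Hb ltac:(lra)).
  apply Rmult_le_compat_l; [apply pow2_ge_0|]; apply pow_incr; lra.
Qed.

Lemma fab_continuity_pt (a b x : R) : 0 < b -> 0 < x -> continuity_pt (fab a b) x.
Proof.
  intros Hb Hx; assert (0 < b ^ 2) by (apply pow_lt; lra).
  unfold fab; reg; lra.
Qed.

Theorem lemma4 (a b : R) (ha : 0 < a) (hb : 0 < b) :
  (1 < b ->
     forall x0 : R, 0 < x0 ->
       exists l : R, 0 < l /\ fab a b l = l /\ Un_cv (orbit (fab a b) x0) l) /\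
  (b < 1 ->
     forall y0 : R, 0 < y0 ->
       exists l : R, Un_cv (orbit (fun x => fab a b (fab a b x)) y0) l).
Proof.
  pose proof (fab_range_lb_pos a b ha hb) as Hm.
  split.
  - intros Hb1 x0 Hx0.
    destruct (orbit_cv (fab a b) _ _ Hm
                (fun x Hx => fab_range a b x hb Hx)
                (fun x y Hx Hxy => fab_nondecr a b x y (Rlt_le _ _ Hb1) Hx Hxy)
                x0 Hx0) as [l [Hl Hcv]].
    exists l; repeat split; [exact Hl | | exact Hcv].
    exact (orbit_cv_fixed _ _ _ (fab_continuity_pt a b l hb Hl) Hcv).
  - intros Hb1 y0 Hy0.
    assert (Hff_range : forall x, 0 < x ->
      a ^ 2 * (/ (/ b ^ 2 + b ^ 2)) ^ 2 <= fab a b (fab a b x)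
        <= a ^ 2 * (/ b ^ 2 + b ^ 2) ^ 2)
      by (intros x Hx; apply fab_range, fab_pos; assumption).
    assert (Hff_nondecr : forall x y, 0 < x -> x <= y ->
      fab a b (fab a b x) <= fab a b (fab a b y)).
    { intros x y Hx Hxy.
      apply fab_nonincr; [exact hb | lra | apply fab_pos; lra |].
      apply fab_nonincr; lra. }
    destruct (orbit_cv _ _ _ Hm Hff_range Hff_nondecr y0 Hy0) as [l [_ Hcv]].
    now exists l.
Qed.
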